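(* Let $P=\bigotimes_{i=1}^n P_i$, $Q=\bigotimes_{i=1}^nQ_i$ be product distributions on $[q]^n$ with $P\ne Q$, $\mathcal C$ a coordinate-wise greedy coupling, $\pi(\omega)=\Pr_{\mathcal C}[X=\omega\mid X\ne Y]$, and $f$ the estimator defined below. Then $$\mathbb E_{\omega\sim\pi}f(\omega)=\frac{d_{TV}(P,Q)}{\Pr_{\mathcal C}[X\ne Y]}=\frac{d_{TV}(P,Q)}{1-\prod_{i=1}^n(1-d_{TV}(P_i,Q_i))},$$ $$\frac1n\le \mathbb E_{\omega\sim\pi}f(\omega)\le 1,$$ and $0\le f(\omega)\le 1$ for every $\omega\in[q]^n$ with $\pi(\omega)>0$.
   Context: $d_{TV}(P,Q)=\frac12\sum_{\omega}|P(\omega)-Q(\omega)|$ (equivalently, the minimum of $\Pr[X\ne Y]$ over all couplings of $P$ and $Q$). A coordinate-wise greedy coupling $\mathcal C$ is a distribution on pairs $(X,Y)$ of the form $\mathcal C=\mathcal C_1\otimes\cdots\otimes\mathcal C_n$, where each $\mathcal C_i$ is a coupling of $P_i$ and $Q_i$ with $\Pr_{\mathcal C_i}[X_i=Y_i=c]=\min\{P_i(c),Q_i(c)\}$ for all $c\in[q]$. The estimator is defined, for $\omega$ with $\Pr_{\mathcal C}[X=\omega\wedge X\ne Y]>0$ (equivalently $\pi(\omega)>0$), by $$f(\omega)=\frac{\max\{0,P(\omega)-Q(\omega)\}}{\Pr_{\mathcal C}[X=\omega\wedge X\neq Y]}.$$ *)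

From HB Require Import structures.
From mathcomp Require Import all_boot all_order all_algebra.
Set Implicit Arguments. Unset Strict Implicit. Unset Printing Implicit Defensive.
Import Order.TTheory GRing.Theory Num.Theory.
Local Open Scope ring_scope.

Section Defs.
Variable R : realFieldType.

Definition is_dist (T : finType) (p : T -> R) :=
  (forall t, 0 <= p t) /\ \sum_t p t = 1.

Definition dTV (T : finType) (p p' : T -> R) : R :=
  2^-1 * \sum_t `|p t - p' t|.

Definition is_coupling (q : nat) (C : 'I_q -> 'I_q -> R) (p p' : 'I_q -> R) :=
  [/\ forall a b, 0 <= C a b,
      forall a, \sum_b C a b = p a &
      forall b, \sum_a C a b = p' b].

Definition is_greedy_coupling (q : nat) (C : 'I_q -> 'I_q -> R) (p p' : 'I_q -> R) :=
  is_coupling C p p' /\ forall c, C c c = Num.min (p c) (p' c).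

Variables (n q : nat).
Notation word := {ffun 'I_n -> 'I_q}.

Definition prodd (P : 'I_n -> 'I_q -> R) (w : word) : R := \prod_i P i (w i).

Definition prodC (C : 'I_n -> 'I_q -> 'I_q -> R) (x y : word) : R :=
  \prod_i C i (x i) (y i).

Definition PrNe C : R := \sum_(x : word) \sum_(y : word | y != x) prodC C x y.

Definition PrXeqNe C (w : word) : R := \sum_(y : word | y != w) prodC C w y.

Definition piC C (w : word) : R := PrXeqNe C w / PrNe C.

Definition estim (P Q : 'I_n -> 'I_q -> R) C (w : word) : R :=
  Num.max 0 (prodd P w - prodd Q w) / PrXeqNe C w.

Definition Epi_f (P Q : 'I_n -> 'I_q -> R) C : R :=
  \sum_(w : word | 0 < piC C w) piC C w * estim P Q C w.

End Defs.

(* The greedy coupling puts mass prod_i min(P_i(w_i), Q_i(w_i)) on each diagonal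
   pair (w, w), so Pr[X = w, X <> Y] = P(w) - prod_i min(P_i, Q_i)(w_i), which
   dominates max(0, P(w) - Q(w)); this gives 0 <= f <= 1, and summing over w
   gives E_pi f = d_TV(P, Q) / Pr[X <> Y] with
   Pr[X <> Y] = 1 - prod_i (1 - d_TV(P_i, Q_i)).  For the lower bound, the union
   bound gives Pr[X <> Y] <= sum_i d_TV(P_i, Q_i), and each marginal distance is
   at most d_TV(P, Q). *)
From HB Require Import structures.
From mathcomp Require Import all_boot all_order all_algebra.
From mathcomp Require Import ring lra.
Set Implicit Arguments.
Unset Strict Implicit.
Unset Printing Implicit Defensive.
Import Order.TTheory GRing.Theory Num.Theory.
Local Open Scope ring_scope.

Lemma sum_pos_part_subr (R : realFieldType) (T : finType) (p p' : T -> R) :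
  \sum_t p t = \sum_t p' t -> \sum_t Num.max 0 (p t - p' t) = dTV p p'.
Proof.
move=> eq_mass; under eq_bigr do rewrite maxr_absE sub0r normrN add0r.
by rewrite -mulr_suml big_split /= sumrB eq_mass subrr add0r mulrC.
Qed.

Lemma dTV_gt0 (R : realFieldType) (T : finType) (p p' : T -> R) (t : T) :
  p t != p' t -> 0 < dTV p p'.
Proof.
move=> neq_t; rewrite /dTV mulr_gt0 ?invr_gt0 ?ltr0n //.
by rewrite (bigD1 t) //= ltr_pwDl ?sumr_ge0 // normr_gt0 subr_eq0.
Qed.

Lemma one_sub_prod_le_sum (R : realFieldType) (m : nat) (a : 'I_m -> R) :
  (forall i, 0 <= a i <= 1) -> 1 - \prod_i a i <= \sum_i (1 - a i).
Proof.
elim: m a => [|m IH] a a01; first by rewrite !big_ord0 subrr.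
rewrite !big_ord_recr /=.
have := IH (fun i => a (widen_ord (leqnSn m) i)) (fun i => a01 _).
set p := \prod_(i < m) _; set s := \sum_(i < m) _ => IHa.
have p_ge0 : 0 <= p.
  by apply: prodr_ge0 => i _; case/andP: (a01 (widen_ord (leqnSn m) i)).
have p_le1 : p <= 1 by apply: prodr_ile1 => i _; exact: a01.
by case/andP: (a01 ord_max) => *; nra.
Qed.

Section ProductSums.
Variables (R : realFieldType) (n q : nat).
Local Notation word := {ffun 'I_n -> 'I_q}.
Implicit Types (F P Q : 'I_n -> 'I_q -> R) (w : word).

Lemma sum_prodd F : (forall i, \sum_c F i c = 1) -> \sum_(w : word) prodd F w = 1.
Proof. by move=> F1; rewrite -bigA_distr_bigA big1. Qed.

Lemma sum_prodd_marginal F i (g : 'I_q -> R) :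
  (forall j, \sum_c F j c = 1) ->
  \sum_(w : word) g (w i) * prodd F w = \sum_c g c * F i c.
Proof.
move=> F1; pose G j c := if j == i then g c * F j c else F j c.
transitivity (\sum_(w : word) \prod_j G j (w j)).
  apply: eq_bigr => w _; rewrite /prodd (bigD1 i) // [RHS](bigD1 i) //=.
  rewrite /G eqxx mulrA; congr (_ * _).
  by apply: eq_bigr => j /negbTE ->.
have other_rows1 : \prod_(j < n | j != i) \sum_c G j c = 1.
  by apply: big1 => j /negbTE ji; rewrite /G ji F1.
by rewrite -(bigA_distr_bigA G) (bigD1 i) //= other_rows1 mulr1 /G eqxx.
Qed.

Lemma dTV_marginal_le P Q i :
  (forall j, \sum_c P j c = 1) -> (forall j, \sum_c Q j c = 1) ->
  dTV (P i) (Q i) <= dTV (prodd P) (prodd Q).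
Proof.
move=> P1 Q1; rewrite -!sum_pos_part_subr ?P1 ?Q1 ?sum_prodd //.
(* test both sides against the indicator of {P i > Q i} in coordinate i *)
pose g c : R := if 0 < P i c - Q i c then 1 else 0.
have -> : \sum_c Num.max 0 (P i c - Q i c) = \sum_c g c * (P i c - Q i c).
  by apply: eq_bigr => c _; rewrite /g; case: ltP; rewrite ?mul1r ?mul0r.
under eq_bigr do rewrite mulrBr.
rewrite sumrB -(sum_prodd_marginal i g P1) -(sum_prodd_marginal i g Q1) -sumrB.
apply: ler_sum => w _; rewrite -mulrBr /g; case: ifP => _.
  by rewrite mul1r le_max lexx orbT.
by rewrite mul0r le_max lexx.
Qed.

End ProductSums.

Section GreedyCoupling.
Variables (R : realFieldType) (n q : nat).
Variables (P Q : 'I_n -> 'I_q -> R) (C : 'I_n -> 'I_q -> 'I_q -> R).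
Hypothesis P_dist : forall i, is_dist (P i).
Hypothesis Q_dist : forall i, is_dist (Q i).
Hypothesis C_greedy : forall i, is_greedy_coupling (C i) (P i) (Q i).
Local Notation word := {ffun 'I_n -> 'I_q}.
Implicit Types (w : word).

Let P1 i : \sum_c P i c = 1. Proof. by case: (P_dist i). Qed.
Let Q1 i : \sum_c Q i c = 1. Proof. by case: (Q_dist i). Qed.
Let C_ge0 i a b : 0 <= C i a b. Proof. by case: (C_greedy i) => [[]]. Qed.
Let C_diag i c : C i c c = Num.min (P i c) (Q i c).
Proof. by case: (C_greedy i). Qed.

Lemma sum_diag_greedy i : \sum_c C i c c = 1 - dTV (P i) (Q i).
Proof.
under eq_bigr do rewrite C_diag minr_absE.
by rewrite -mulr_suml sumrB big_split /= P1 Q1 /dTV; field.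
Qed.

Lemma PrXeqNeE w : PrXeqNe C w = prodd P w - prodC C w w.
Proof.
have <- : \sum_y prodC C w y = prodd P w.
  rewrite /prodC -(bigA_distr_bigA (fun i b => C i (w i) b)).
  by apply: eq_bigr => i _; case: (C_greedy i) => [[_ ->]].
by rewrite (bigD1 w) //= [prodC C w w + _]addrC addrK.
Qed.

Lemma prodC_diag_le w :
  [/\ 0 <= prodC C w w, prodC C w w <= prodd P w & prodC C w w <= prodd Q w].
Proof.
split; first by apply: prodr_ge0 => i _.
  by apply: ler_prod => i _; rewrite C_ge0 C_diag ge_min lexx.
by apply: ler_prod => i _; rewrite C_ge0 C_diag ge_min lexx orbT.
Qed.

Lemma pos_part_le_PrXeqNe w :
  0 <= Num.max 0 (prodd P w - prodd Q w) <= PrXeqNe C w.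
Proof.
case: (prodC_diag_le w) => m_ge0 m_leP m_leQ.
by rewrite le_max lexx /= ge_max PrXeqNeE subr_ge0 m_leP lerB.
Qed.

Lemma PrNeE : PrNe C = 1 - \prod_i (1 - dTV (P i) (Q i)).
Proof.
rewrite /PrNe (eq_bigr _ (fun w _ => PrXeqNeE w)) sumrB sum_prodd //.
rewrite /prodC -(bigA_distr_bigA (fun i c => C i c c)).
by under eq_bigr do rewrite sum_diag_greedy.
Qed.

Lemma dTV_le_PrNe : dTV (prodd P) (prodd Q) <= PrNe C.
Proof.
rewrite -sum_pos_part_subr ?sum_prodd //; apply: ler_sum => w _.
by case/andP: (pos_part_le_PrXeqNe w).
Qed.

Lemma PrNe_le_dTV_muln : PrNe C <= dTV (prodd P) (prodd Q) *+ n.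
Proof.
have diag_01 i : 0 <= 1 - dTV (P i) (Q i) <= 1.
  by rewrite -sum_diag_greedy sumr_ge0 //= -(P1 i) ler_sum // => c _;
     rewrite C_diag ge_min lexx.
rewrite PrNeE; apply: le_trans _.
  exact: (@one_sub_prod_le_sum _ _ (fun i => 1 - dTV (P i) (Q i)) diag_01).
rewrite -[X in _ *+ X](card_ord n) -sumr_const; apply: ler_sum => i _.
by rewrite opprB addrC subrK dTV_marginal_le.
Qed.

Lemma PrXeqNe_gt0 w : 0 < piC C w -> 0 < PrXeqNe C w.
Proof.
move=> pi_gt0; case/andP: (pos_part_le_PrXeqNe w) => M_ge0 M_leX.
rewrite lt0r (le_trans M_ge0 M_leX) andbT.
by apply: contraTneq pi_gt0 => X0; rewrite /piC X0 mul0r ltxx.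
Qed.

Lemma Epi_fE : 0 < PrNe C -> Epi_f P Q C = dTV (prodd P) (prodd Q) / PrNe C.
Proof.
move=> N_gt0; rewrite /Epi_f big_mkcond -sum_pos_part_subr ?sum_prodd //.
rewrite mulr_suml; apply: eq_bigr => w _.
case: ifP => [/PrXeqNe_gt0 X_gt0 | /negbT].
  by rewrite /piC /estim; field; rewrite !gt_eqF.
rewrite -leNgt /piC pmulr_lle0 ?invr_gt0 // => X_le0.
have /andP[_ /le_trans/(_ X_le0)] := pos_part_le_PrXeqNe w.
by rewrite ge_max lexx => /max_l->; rewrite mul0r.
Qed.

Lemma estim_bounds w : 0 < piC C w -> 0 <= estim P Q C w <= 1.
Proof.
move=> /PrXeqNe_gt0 X_gt0; case/andP: (pos_part_le_PrXeqNe w) => M_ge0 M_leX.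
by rewrite /estim divr_ge0 ?(ltW X_gt0) //= ler_pdivrMr // mul1r.
Qed.

End GreedyCoupling.

Theorem lemma3p3 (R : realFieldType) (n q : nat)
  (P Q : 'I_n -> 'I_q -> R) (C : 'I_n -> 'I_q -> 'I_q -> R) :
  (forall i, is_dist (P i)) -> (forall i, is_dist (Q i)) ->
  (exists w : {ffun 'I_n -> 'I_q}, prodd P w != prodd Q w) ->
  (forall i, is_greedy_coupling (C i) (P i) (Q i)) ->
  [/\ Epi_f P Q C = dTV (prodd P) (prodd Q) / PrNe C,
      dTV (prodd P) (prodd Q) / PrNe C
        = dTV (prodd P) (prodd Q) / (1 - \prod_i (1 - dTV (P i) (Q i))),
      n%:R^-1 <= Epi_f P Q C <= 1 &
      forall w : {ffun 'I_n -> 'I_q}, 0 < piC C w ->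
        0 <= estim P Q C w <= 1].
Proof.
move=> P_dist Q_dist [w0 PQ_neq] C_greedy.
have d_gt0 : 0 < dTV (prodd P) (prodd Q) := dTV_gt0 PQ_neq.
have N_gt0 : 0 < PrNe C := lt_le_trans d_gt0 (dTV_le_PrNe P_dist Q_dist C_greedy).
have N_le := PrNe_le_dTV_muln P_dist Q_dist C_greedy.
split; first exact: Epi_fE.
- by rewrite (PrNeE P_dist Q_dist C_greedy).
- rewrite Epi_fE // ler_pdivrMr // mul1r dTV_le_PrNe // andbT.
  have [n0|n_gt0] := posnP n; first by rewrite [in n%:R]n0 invr0 divr_ge0 ?ltW.
  by rewrite ler_pdivlMr // mulrC ler_pdivrMr ?ltr0n // mulr_natr.
- exact: estim_bounds.
Qed.
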